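(* For any skew-symmetric matrix $M$ (with labels $A$), $\sum_{\mathsf{I}\subseteq A}\operatorname{Pf}(M_{\mathsf{I}})\langle\mathsf{I}|$ and $\sum_{\mathsf{I}\subseteq A}\operatorname{Pf}(M_{\bar{\mathsf{I}}})|\mathsf{I}\rangle$ are morphisms of $\mathscr{P}$. Consequently $\mathscr{P}$ is a dagger monoidal category (with the usual vector space dagger).
   Context: For $i\in\mathbb{N}$, let $V_i\cong\mathbb{C}^2$ have orthonormal basis $v_{i,0},v_{i,1}$, and for $\mathsf{N}\subset\mathbb{N}$ let $V_{\mathsf{N}}=\bigotimes_{i\in\mathsf{N}}V_i$. For a skew-symmetric matrix $M$ whose rows and columns carry the same labels $\mathsf{N}$ in the same order, define $\operatorname{sPf}(M)=\sum_{\mathsf{I}\subseteq\mathsf{N}}\operatorname{Pf}(M_{\mathsf{I}})|\mathsf{I}\rangle$ and $\operatorname{sPf}^{\vee}(M)=\sum_{\mathsf{I}\subseteq\mathsf{N}}\operatorname{Pf}(M_{\bar{\mathsf{I}}})\langle\mathsf{I}|$, where $M_{\mathsf{I}}$ is the principal submatrix with labels $\mathsf{I}$, $M_{\bar{\mathsf{I}}}$ is the principal submatrix with the rows and columns labeled $\mathsf{I}$ removed, $|\mathsf{I}\rangle=\bigotimes_{i\in\mathsf{N}}v_{i,\chi(i,\mathsf{I})}$, $\langle\mathsf{I}|=\bigotimes_{i\in\mathsf{N}}v^*_{i,\chi(i,\mathsf{I})}$, with $\chi(i,\mathsf{I})=1$ if $i\in\mathsf{I}$ and $0$ otherwise. $\mathscr{P}$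 is the free monoidal subcategory of finite-dimensional complex vector spaces whose objects are $V_{\mathsf{N}}$ for ordered subsets $\mathsf{N}\subset\mathbb{N}$ (usual tensor product) and whose morphisms are generated, under the usual composition/contraction and tensor product, by all morphisms $\operatorname{sPf}(M)$ and $\operatorname{sPf}^{\vee}(M)$. *)

From mathcomp Require Import all_boot all_algebra.
From mathcomp Require Import complex.
From mathcomp Require Import reals Rstruct.
Set Implicit Arguments. Unset Strict Implicit. Unset Printing Implicit Defensive.
Import GRing.Theory Num.Theory.
Local Open Scope ring_scope.

Definition C : numClosedFieldType := (Rdefinitions.R)[i].

Definition rem_nth {T} (k : nat) (s : seq T) := take k s ++ drop k.+1 s.

(* Expansion along the first index:
   Pf(A) = sum_{j>=2} (-1)^j a_{1 j} Pf(A with rows/cols 1, j removed);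
   Pf of the empty matrix is 1 and Pf of odd size is 0. *)
Fixpoint pf_aux n (A : 'M[C]_n) (fuel : nat) (s : seq 'I_n) : C :=
  match s with
  | [::] => 1
  | i :: t =>
      match fuel with
      | 0 => 0
      | m.+1 => \sum_(k < size t)
                  (-1) ^+ k * A i (nth i t k) * pf_aux A m (rem_nth k t)
      end
  end.

Definition pfaffian n (A : 'M[C]_n) : C := pf_aux A n (enum 'I_n).

(* principal submatrix M_I, rows/columns in the induced (increasing) order *)
Definition prin n (M : 'M[C]_n) (I : {set 'I_n}) : 'M[C]_#|I| :=
  \matrix_(i, j) M (enum_val i) (enum_val j).

(* A basis vector of V_N (N : seq nat, uniq) is |I> for I subset of N;
   it is represented by an assignment y : nat -> bool of bits to labels
   (only the labels in N matter). A linear map f : V_N -> V_N' is given by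
   its matrix coefficients f y x = <y| f |x> (y on N', x on N). *)
Definition asg := nat -> bool.
Definition mor := asg -> asg -> C.

Definition pos (N : seq nat) (y : asg) : {set 'I_(size N)} :=
  [set k : 'I_(size N) | y (nth 0%N N (nat_of_ord k))].

Definition asg_of (N : seq nat) (t : (size N).-tuple bool) : asg :=
  fun l => if l \in N then nth false t (index l N) else false.

Definition upd (y : asg) (i : nat) (b : bool) : asg :=
  fun l => if l == i then b else y l.

(* sPf(M) = sum_I Pf(M_I) |I>  : V_{[::]} -> V_N *)
Definition sPf (N : seq nat) (M : 'M[C]_(size N)) : mor :=
  fun y _ => pfaffian (prin M (pos N y)).
(* sPf^v(M) = sum_I Pf(M_{\bar I}) <I|  : V_N -> V_{[::]} *)
Definition sPfv (N : seq nat) (M : 'M[C]_(size N)) : mor :=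
  fun _ x => pfaffian (prin M (~: pos N x)).

Definition idm (N : seq nat) : mor := fun y x => (all (fun l => y l == x l) N)%:R.

Definition compm (B : seq nat) (g f : mor) : mor :=
  fun z x => \sum_(t : (size B).-tuple bool) g z (asg_of t) * f (asg_of t) x.

(* tensor product of maps on disjoint label sets *)
Definition tensm (f g : mor) : mor := fun y x => f y x * g y x.

Definition tracem (i : nat) (f : mor) : mor :=
  fun y x => \sum_(b : bool) f (upd y i b) (upd x i b).

Definition dagger (f : mor) : mor := fun y x => (f x y)^*.

(* The category P: inP N N' f  means  f : V_N -> V_N' is a morphism of P. *)
Inductive inP : seq nat -> seq nat -> mor -> Prop :=
| P_sPf N (M : 'M[C]_(size N)) :
    uniq N -> M^T = - M -> inP [::] N (sPf M)
| P_sPfv N (M : 'M[C]_(size N)) :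
    uniq N -> M^T = - M -> inP N [::] (sPfv M)
| P_id N : uniq N -> inP N N (idm N)
| P_comp A B D f g : inP A B f -> inP B D g -> inP A D (compm B g f)
| P_tens A B A' B' f g :
    inP A B f -> inP A' B' g -> uniq (A ++ A') -> uniq (B ++ B') ->
    inP (A ++ A') (B ++ B') (tensm f g)
| P_trace A B i f :
    inP A B f -> i \in A -> i \in B -> inP (rem i A) (rem i B) (tracem i f).

(* The only thing missing to turn the generators sPf(M) and sPf^v(M) into
   their "mirror" versions is the global bit flip X^{(x) N}, which maps |I> to
   |N \ I>: composing it with sPf^v(M) gives sum_I Pf(M_I) <I|, and with sPf(M)
   gives sum_I Pf(M_{\bar I}) |I>.  The flip on one wire is itself a contraction
   of Pfaffian states of the all-ones upper triangular skew matrix U, since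
   Pf(U_I) is 1 for |I| in {0, 2} and 0 for |I| in {1, 3}.  The dagger of a
   Pfaffian generator is the mirror generator of the conjugate matrix, and
   conjugate transposition commutes with composition, tensor products and
   contraction, so P is closed under the dagger by induction. *)
From mathcomp Require Import all_boot all_algebra.
From mathcomp Require Import complex.
From mathcomp Require Import reals Rstruct.
From Stdlib Require Import FunctionalExtensionality.
Import GRing.Theory Num.Theory.
Local Open Scope ring_scope.
Set Implicit Arguments. Unset Strict Implicit. Unset Printing Implicit Defensive.

Lemma inP_ext A B A' B' (f g : mor) :
  inP A B f -> A = A' -> B = B' -> (forall y x, f y x = g y x) -> inP A' B' g.
Proof.
move=> Pf <- <- fg.
suff -> : g = f by [].
by apply: functional_extensionality => y; apply: functional_extensionality.
Qed.

Lemma ltn_enum_val n (I : {set 'I_n}) (i j : 'I_#|I|) :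
  (i < j)%N -> (enum_val i < enum_val j)%N.
Proof.
move=> lt_ij; rewrite /enum_val.
have ltn_trans_val : transitive (relpre (@nat_of_ord n) ltn).
  by move=> a b c; apply: ltn_trans.
have sorted_I : sorted (relpre val ltn) (enum I).
  rewrite /enum_mem -enumT; apply: sorted_filter => //.
  by rewrite -sorted_map val_enum_ord iota_ltn_sorted.
have i_lt : (nat_of_ord i) \in [pred k | (k < size (enum I))%N] by rewrite inE -cardE.
have j_lt : (nat_of_ord j) \in [pred k | (k < size (enum I))%N] by rewrite inE -cardE.
have := sorted_ltn_nth ltn_trans_val (enum_default i) sorted_I _ _ i_lt j_lt lt_ij.
by rewrite (set_nth_default (enum_default i) (enum_default j)) -?cardE.
Qed.

Lemma pfaffian0 n (A : 'M[C]_n) : n = 0%N -> pfaffian A = 1.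
Proof.
move=> n0; subst n; rewrite /pfaffian.
have : size (enum 'I_0) = 0%N by rewrite size_enum_ord.
by case: (enum 'I_0).
Qed.

Lemma pfaffian_size1_3 n (A : 'M[C]_n) : n = 1%N \/ n = 3%N -> pfaffian A = 0.
Proof.
rewrite /pfaffian; have := size_enum_ord n.
case: (enum 'I_n) => [|a [|b [|c [|d t]]]] //= size_n [] n_val; subst n => //=.
  by rewrite big_ord0.
by rewrite !big_ord_recr !big_ord0 /= /rem_nth /= !big_ord0 !mulr0 !addr0.
Qed.

Lemma pfaffian2 n (A : 'M[C]_n) (i j : 'I_n) :
  n = 2%N -> val i = 0%N -> val j = 1%N -> pfaffian A = A i j.
Proof.
move=> n2 i0 j1; subst n; rewrite /pfaffian.
have := val_enum_ord 2; case: (enum 'I_2) => [|a [|b [|c t]]] // [a0 b1].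
have -> : a = i by apply: val_inj; rewrite i0.
have -> : b = j by apply: val_inj; rewrite j1.
by rewrite /= big_ord_recr big_ord0 /= add0r expr0 mul1r mulr1.
Qed.

Definition skew_ones n : 'M[C]_n :=
  \matrix_(i, j) (if (i < j)%N then 1 else if (j < i)%N then -1 else 0).

Lemma skew_ones_skew n : (skew_ones n)^T = - skew_ones n.
Proof.
apply/matrixP => i j; rewrite !mxE.
by case: (ltngtP i j); rewrite ?opprK ?oppr0.
Qed.

Lemma pfaffian_prin_skew_ones n (I : {set 'I_n}) : (#|I| <= 3)%N ->
  pfaffian (prin (skew_ones n) I) = ((#|I| == 0%N) || (#|I| == 2%N))%:R.
Proof.
move=> le3; have : [\/ #|I| = 0, #|I| = 1, #|I| = 2 | #|I| = 3]%N.
  by move: le3; case: #|I| => [|[|[|[|k]]]] // _; [exact: Or41 | exact: Or42 | exact: Or43 | exact: Or44].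
case=> cardI; rewrite [in RHS]cardI /=.
- exact: pfaffian0.
- by apply: pfaffian_size1_3; left.
- have lt0 : (0 < #|I|)%N by rewrite cardI.
  have lt1 : (1 < #|I|)%N by rewrite cardI.
  rewrite (@pfaffian2 _ _ (Ordinal lt0) (Ordinal lt1)) // mxE.
  by rewrite mxE ltn_enum_val.
- by apply: pfaffian_size1_3; right.
Qed.

Lemma card_pos N y : #|pos N y| = count y N.
Proof.
rewrite /pos cardsE cardE /enum_mem -enumT size_filter.
by rewrite -[in RHS](mkseq_nth 0%N N) /mkseq -val_enum_ord -map_comp count_map.
Qed.

Lemma card_posC N y : #|~: pos N y| = (size N - count y N)%N.
Proof. by rewrite cardsCs card_ord setCK card_pos. Qed.

Lemma upd_eq y i b : upd y i b i = b.
Proof. by rewrite /upd eqxx. Qed.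

Lemma upd_ne y i b l : l != i -> upd y i b l = y l.
Proof. by rewrite /upd => /negbTE ->. Qed.

(* The state |01> + |10> on wires l, l+1: contract the wire l+2 of
   sPf(U_3) against sPf^v(U_1); only the branch where that wire carries 1
   survives, and then exactly one of the wires l, l+1 must carry 1. *)
Lemma inP_bell l : inP [::] [:: l; l.+1] (fun y _ => (y l != y l.+1)%:R).
Proof.
set a := l.+1; set c := l.+2.
have la : l != a by rewrite /a neq_ltn ltnSn.
have lc : l != c by rewrite /c neq_ltn ltnW.
have ac : a != c by rewrite /a /c neq_ltn ltnSn.
have uniq_lac : uniq [:: l; a; c] by rewrite /= !inE negb_or la lc.
have Pstate := @P_sPf [:: l; a; c] (skew_ones 3) uniq_lac (skew_ones_skew 3).
have Pcap := @P_sPfv [:: c] (skew_ones 1) isT (skew_ones_skew 1).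
have Ptens := P_tens Pstate Pcap (isT : uniq ([::] ++ [:: c])) uniq_lac.
have c_in : c \in [:: l; a; c] ++ [::] by rewrite !inE eqxx !orbT.
apply: (inP_ext (P_trace Ptens (mem_head _ _) c_in));
  rewrite /= ?eqxx ?(negbTE lc) ?(negbTE ac) //.
move=> y x; rewrite /tracem big_bool /tensm /sPf /sPfv.
rewrite !pfaffian_prin_skew_ones ?card_posC ?card_pos /=
  ?upd_eq ?(upd_ne _ _ la) ?(upd_ne _ _ lc) ?(upd_ne _ _ ac) //;
  by case: (y l); case: (y a); rewrite /= ?mulr1 ?mulr0 ?addr0 ?add0r.
Qed.

(* Bending the wire l+1 of the Bell state with the cap sPf^v(U_2) yields
   the NOT gate on wire l. *)
Lemma inP_not l : inP [:: l] [:: l] (fun y x => (y l != x l)%:R).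
Proof.
set a := l.+1.
have la : l != a by rewrite /a neq_ltn ltnSn.
have uniq_la : uniq [:: l; a] by rewrite /= inE la.
have Pcap := @P_sPfv [:: l; a] (skew_ones 2) uniq_la (skew_ones_skew 2).
have Ptens := P_tens Pcap (inP_bell l) uniq_la uniq_la.
have a_in : a \in [:: l; a] by rewrite !inE eqxx orbT.
apply: (inP_ext (P_trace Ptens a_in a_in)); rewrite ?/= ?(negbTE la) ?eqxx //.
move=> y x; rewrite /tracem big_bool /tensm /sPfv.
rewrite !pfaffian_prin_skew_ones ?card_posC ?card_pos /= ?upd_eq ?(upd_ne _ _ la) //;
  by case: (y l); case: (x l); rewrite /= ?mulr1 ?mulr0 ?addr0 ?add0r ?mul1r ?mul0r.
Qed.

Lemma inP_flip N : uniq N -> inP N N (fun y x => (all (fun l => y l != x l) N)%:R).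
Proof.
elim: N => [_|l N IH /= /andP[lN uN]].
  exact: inP_ext (P_id (isT : uniq [::])) _ _ _.
have uniq_lN : uniq ([:: l] ++ N) by rewrite /= lN uN.
apply: (inP_ext (P_tens (inP_not l) (IH uN) uniq_lN uniq_lN)) => // y x.
by rewrite /tensm -natrM mulnb.
Qed.

Section FlipTuple.

Variables (N : seq nat) (x : asg).
Hypothesis uN : uniq N.

Definition flip_tuple : (size N).-tuple bool :=
  [tuple ~~ x (nth 0%N N k) | k < size N].

Lemma asg_of_nth (t : (size N).-tuple bool) k :
  (k < size N)%N -> asg_of t (nth 0%N N k) = nth false t k.
Proof. by move=> kN; rewrite /asg_of mem_nth // index_uniq. Qed.

Lemma nth_flip_tuple k : (k < size N)%N -> nth false flip_tuple k = ~~ x (nth 0%N N k).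
Proof. by move=> kN; rewrite -[k]/(nat_of_ord (Ordinal kN)) -tnth_nth tnth_mktuple. Qed.

Lemma all_neq_flip_tuple (t : (size N).-tuple bool) :
  all (fun l => asg_of t l != x l) N = (t == flip_tuple).
Proof.
apply/(all_nthP 0%N)/eqP => [t_neq | ->] => [|k kN].
  apply: eq_from_tnth => k; rewrite !(tnth_nth false) nth_flip_tuple //.
  by move: (t_neq k (ltn_ord k)); rewrite asg_of_nth //; case: (nth _ _ _); case: (x _).
by rewrite asg_of_nth // nth_flip_tuple //; case: (x _).
Qed.

Lemma posC_flip_tuple : ~: pos N (asg_of flip_tuple) = pos N x.
Proof. by apply/setP => k; rewrite !inE asg_of_nth // nth_flip_tuple // negbK. Qed.

Lemma pos_flip_tuple : pos N (asg_of flip_tuple) = ~: pos N x.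
Proof. by rewrite -posC_flip_tuple setCK. Qed.

End FlipTuple.

Lemma inP_sPf_bra N (M : 'M[C]_(size N)) : uniq N -> M^T = - M ->
  inP N [::] (fun _ x => pfaffian (prin M (pos N x))).
Proof.
move=> uN skM.
apply: (inP_ext (P_comp (inP_flip uN) (P_sPfv uN skM))) => // z x.
rewrite /compm (bigD1 (flip_tuple N x)) //= big1 ?addr0.
  by rewrite /sPfv all_neq_flip_tuple // eqxx mulr1 posC_flip_tuple.
by move=> t /negbTE t_neq; rewrite all_neq_flip_tuple // t_neq mulr0.
Qed.

Lemma inP_sPfv_ket N (M : 'M[C]_(size N)) : uniq N -> M^T = - M ->
  inP [::] N (fun y _ => pfaffian (prin M (~: pos N y))).
Proof.
move=> uN skM.
apply: (inP_ext (P_comp (P_sPf uN skM) (inP_flip uN))) => // z x.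
have flipE t : all (fun l => z l != asg_of t l) N = (t == flip_tuple N z).
  by rewrite -all_neq_flip_tuple //; apply: eq_all => l; rewrite eq_sym.
rewrite /compm (bigD1 (flip_tuple N z)) //= big1 ?addr0.
  by rewrite /sPf flipE eqxx mul1r pos_flip_tuple.
by move=> t /negbTE t_neq; rewrite flipE t_neq mul0r.
Qed.

Lemma conj_pf_aux n (A : 'M[C]_n) m s :
  (pf_aux A m s)^* = pf_aux (map_mx Num.conj A) m s.
Proof.
elim: m s => [|m IH] [|i t] /=; rewrite ?rmorph1 ?rmorph0 // rmorph_sum.
apply: eq_bigr => k _; rewrite !rmorphM rmorphXn rmorphN1 mxE.
by congr (_ * _); apply: IH.
Qed.

Lemma conj_pfaffian_prin n (M : 'M[C]_n) I :
  (pfaffian (prin M I))^* = pfaffian (prin (map_mx Num.conj M) I).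
Proof.
rewrite /pfaffian conj_pf_aux; congr pf_aux.
by apply/matrixP => i j; rewrite !mxE.
Qed.

Lemma map_mx_conj_skew n (M : 'M[C]_n) :
  M^T = - M -> (map_mx Num.conj M)^T = - map_mx Num.conj M.
Proof. by move=> skM; rewrite map_trmx skM map_mxN. Qed.

Lemma inP_dagger A B f : inP A B f -> inP B A (dagger f).
Proof.
elim => {A B f}.
- move=> N M uN skM; apply: (inP_ext (inP_sPf_bra uN (map_mx_conj_skew skM))) => // y x.
  by rewrite /dagger /sPf conj_pfaffian_prin.
- move=> N M uN skM; apply: (inP_ext (inP_sPfv_ket uN (map_mx_conj_skew skM))) => // y x.
  by rewrite /dagger /sPfv conj_pfaffian_prin.
- move=> N uN; apply: (inP_ext (P_id uN)) => // y x.
  rewrite /dagger /idm conjC_nat.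
  by rewrite (eq_all (a2 := fun l => x l == y l)) // => l; rewrite eq_sym.
- move=> A B D f g _ Pf _ Pg; apply: (inP_ext (P_comp Pg Pf)) => // y x.
  rewrite /dagger /compm rmorph_sum; apply: eq_bigr => t _.
  by rewrite rmorphM mulrC.
- move=> A B A' B' f g _ Pf _ Pg uA uB; apply: (inP_ext (P_tens Pf Pg uB uA)) => // y x.
  by rewrite /dagger /tensm rmorphM.
- move=> A B i f _ Pf iA iB; apply: (inP_ext (P_trace Pf iB iA)) => // y x.
  by rewrite /dagger /tracem rmorph_sum.
Qed.

Theorem mainTheorem4 :
  (forall (N : seq nat) (M : 'M[C]_(size N)), uniq N -> M^T = - M ->
     inP N [::] (fun _ x => pfaffian (prin M (pos N x))) /\
     inP [::] N (fun y _ => pfaffian (prin M (~: pos N y))))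
  /\ (forall (A B : seq nat) (f : mor), inP A B f -> inP B A (dagger f)).
Proof.
split; last exact: inP_dagger.
by move=> N M uN skM; split; [apply: inP_sPf_bra | apply: inP_sPfv_ket].
Qed.
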